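(* If $\lim_{|x|\to\infty}\int_{-\infty}^{\infty}G(x,t)\,dt=0$, then $$\lim_{N\to\infty}\sup_{x\in\mathbb R}\int_{-\infty}^{-N}G(x,t)\,dt=0\quad\text{and}\quad \lim_{N\to\infty}\sup_{x\in\mathbb R}\int_{N}^{\infty}G(x,t)\,dt=0.$$
   Context: Let $q:\mathbb R\to\mathbb R$ be measurable with $q\in L_1^{\mathrm{loc}}(\mathbb R)$ and $q(x)\ge1$ a.e. A principal fundamental system of solutions (PFSS) of $z''=q(x)z$ is a pair $u,v$ of solutions ($C^1$, derivative locally absolutely continuous, equation a.e.) such that for all $x$: $u>0$, $v>0$, $u'<0$, $v'>0$, $v'u-u'v=1$, $u(x)=v(x)\int_x^\infty v(t)^{-2}dt$, and $u,u'\to0$ as $x\to\infty$, $v,v'\to0$ as $x\to-\infty$, $v,v'\to\infty$ as $x\to\infty$, $u,|u'|\to\infty$ as $x\to-\infty$. Fix a PFSS $\{u,v\}$. The Green function is $G(x,t)=u(x)v(t)$ for $x\ge t$ and $G(x,t)=u(t)v(x)$ for $x\le t$. *)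

From HB Require Import structures.
From mathcomp Require Import all_boot all_order all_algebra.
From mathcomp Require Import all_classical all_reals all_analysis.
Set Implicit Arguments. Unset Strict Implicit. Unset Printing Implicit Defensive.
Import Order.TTheory GRing.Theory Num.Theory.
Import numFieldNormedType.Exports.
Local Open Scope classical_set_scope.
Local Open Scope ring_scope.

Section defs.
Context {R : realType}.

Definition abs_continuous_on (a b : R) (f : R -> R) : Prop :=
  forall eps : R, 0 < eps -> exists2 delta : R, 0 < delta &
    forall (n : nat) (l r : 'I_n -> R),
      (forall i, a <= l i /\ l i <= r i /\ r i <= b) ->
      (forall i j, i != j -> r i <= l j \/ r j <= l i) ->
      \sum_(i < n) (r i - l i) < delta ->
      \sum_(i < n) `|f (r i) - f (l i)| < eps.

Definition is_solution (q z : R -> R) : Prop :=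
  [/\ (forall x, derivable z x 1),
      continuous ((derive1 z)),
      (forall a b, a <= b -> abs_continuous_on a b ((derive1 z))) &
      {ae (@lebesgue_measure R), forall x,
          derivable ((derive1 z)) x 1 /\ derive1 (derive1 z) x = q x * z x}].

Definition PFSS (q u v : R -> R) : Prop :=
  [/\ is_solution q u, is_solution q v,
      (forall x, [/\ 0 < u x, 0 < v x, (derive1 u) x < 0, 0 < (derive1 v) x &
                     (derive1 v) x * u x - (derive1 u) x * v x = 1]),
      (forall x, ((u x)%:E =
         (v x)%:E * (\int[@lebesgue_measure R]_(t in `[x, +oo[) ((v t ^+ 2)^-1)%:E))%E) &
      [/\ u x @[x --> +oo] --> 0, (derive1 u) x @[x --> +oo] --> 0,
          v x @[x --> -oo] --> 0 & (derive1 v) x @[x --> -oo] --> 0] /\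
      [/\ v x @[x --> +oo] --> +oo, (derive1 v) x @[x --> +oo] --> +oo,
          u x @[x --> -oo] --> +oo & `|(derive1 u) x| @[x --> -oo] --> +oo]].

Definition Green (u v : R -> R) (x t : R) : R :=
  if t <= x then u x * v t else u t * v x.

End defs.

From HB Require Import structures.
From mathcomp Require Import all_boot all_order all_algebra.
From mathcomp Require Import all_classical all_reals all_analysis.
From mathcomp Require Import measurable_realfun.
Import Order.TTheory GRing.Theory Num.Theory.
Import numFieldNormedType.Exports.
Local Open Scope classical_set_scope.
Local Open Scope ring_scope.

(* Since u decreases and v increases, pushing x towards a tail only enlarges
   the Green function there: for t <= a <= x, G(x,t) = u(x) v(t) <= u(a) v(t)
   = G(a,t).  Hence the mass of G(x,.) on ]-oo, a] is at most the total mass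
   at min(x, a) <= a, and the supremum over x of the left tail is controlled by
   the total mass near -oo; symmetrically on the right. *)

Section cvge0.
Context {R : realType} {T : Type} {F : set_system T} {FF : Filter F}.
Implicit Type f : T -> \bar R.

Lemma cvge0_near_le f : f @ F --> 0%E ->
  forall e : R, 0 < e -> \forall x \near F, (f x <= e%:E)%E.
Proof.
move=> /fine_cvgP[Ffin /cvgrPdist_le fcvg] e e0.
apply: filterS2 Ffin (fcvg e e0) => x fx; rewrite sub0r normrN -(fineK fx) lee_fin.
exact: le_trans (ler_norm _).
Qed.

Lemma ge0_near_le_cvge0 f : (forall x, 0 <= f x)%E ->
  (forall e : R, 0 < e -> \forall x \near F, (f x <= e%:E)%E) -> f @ F --> 0%E.
Proof.
move=> f0 fle; have Ffin : \forall x \near F, f x \is a fin_num.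
  by apply: filterS (fle 1 ltr01) => x fx; rewrite ge0_fin_numE // (le_lt_trans fx) ?ltry.
apply/fine_cvgP; split => //; apply/cvgrPdist_le => e e0.
apply: filterS2 Ffin (fle e e0) => x fx fxe.
by rewrite sub0r normrN ger0_norm ?fine_ge0 // -lee_fin fineK.
Qed.

End cvge0.

Section monotone.
Context {R : realType}.
Implicit Type f : R -> R.

Lemma derivable1_continuous f : (forall x, derivable f x 1) -> continuous f.
Proof. by move=> df x; apply/differentiable_continuous/derivable1_diffP. Qed.

Lemma derive1_le0_nonincreasing f : (forall x, derivable f x 1) ->
  (forall x, derive1 f x <= 0) -> {homo f : x y / x <= y >-> y <= x}.
Proof.
move=> df df0 x y xy.
apply: (@ler0_derive1_le_cc R f x y (fun z _ => df z) (fun z _ => df0 z)).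
- by apply: derivable_within_continuous => z _; exact: df.
all: by rewrite // in_itv /= lexx xy.
Qed.

Lemma derive1_ge0_nondecreasing f : (forall x, derivable f x 1) ->
  (forall x, 0 <= derive1 f x) -> {homo f : x y / x <= y}.
Proof.
move=> df df0 x y xy.
apply: (@ger0_derive1_le_cc R f x y (fun z _ => df z) (fun z _ => df0 z)).
- by apply: derivable_within_continuous => z _; exact: df.
all: by rewrite // in_itv /= lexx xy.
Qed.

End monotone.

Section green_tails.
Context {R : realType}.
Variables u v : R -> R.
Hypotheses (u_gt0 : forall x, 0 < u x) (v_gt0 : forall x, 0 < v x).
Hypothesis u_nonincr : {homo u : x y / x <= y >-> y <= x}.
Hypothesis v_nondecr : {homo v : x y / x <= y}.
Hypotheses (u_cont : continuous u) (v_cont : continuous v).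

Local Notation mass A x :=
  (\int[@lebesgue_measure R]_(t in A) (Green u v x t)%:E)%E.

Lemma Green_ge0 x t : 0 <= Green u v x t.
Proof. by rewrite /Green; case: ifP => _; apply: mulr_ge0; exact: ltW. Qed.

Lemma Green_ge x t : t <= x -> Green u v x t = u x * v t.
Proof. by rewrite /Green => ->. Qed.

Lemma Green_le x t : x <= t -> Green u v x t = u t * v x.
Proof.
rewrite /Green le_eqVlt => /predU1P[->|xt]; first by rewrite lexx.
by rewrite leNgt xt.
Qed.

Lemma Green_le_left a x t : a <= x -> t <= a -> Green u v x t <= Green u v a t.
Proof.
move=> ax ta; rewrite !Green_ge ?(le_trans ta ax) //.
by rewrite ler_wpM2r ?u_nonincr // ltW.
Qed.

Lemma Green_le_right a x t : x <= a -> a <= t -> Green u v x t <= Green u v a t.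
Proof.
move=> xa a_le_t; rewrite !Green_le ?(le_trans xa a_le_t) //.
by rewrite ler_wpM2l ?v_nondecr // ltW.
Qed.

Lemma measurable_Green x : measurable_fun [set: R] (fun t => (Green u v x t)%:E).
Proof.
apply/measurable_EFinP; apply: measurable_fun_ifT.
- by apply: measurable_fun_ler; [exact: measurable_id | exact: measurable_cst].
- by apply: measurable_funM; [exact: measurable_cst | exact: continuous_measurable_fun].
- by apply: measurable_funM; [exact: continuous_measurable_fun | exact: measurable_cst].
Qed.

Lemma Green_mass_le_total A x : measurable A -> (mass A x <= mass [set: R] x)%E.
Proof.
move=> mA; apply: ge0_subset_integral => //; first exact: measurable_Green.
by move=> t _; rewrite lee_fin Green_ge0.
Qed.

Lemma Green_mass_le A a x : measurable A ->
  (forall t, A t -> Green u v x t <= Green u v a t) -> (mass A x <= mass A a)%E.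
Proof.
move=> mA Gle; apply: ge0_le_integral => //.
- by move=> t _; rewrite lee_fin Green_ge0.
- exact: measurable_funS (measurable_Green x).
- exact: measurable_funS (measurable_Green a).
Qed.

Lemma Green_left_tail_le a x :
  (mass `]-oo, a] x <= mass [set: R] (Num.min x a))%E.
Proof.
have mA : measurable `]-oo, a] by exact: measurable_itv.
case: (leP x a) => [xa|ax]; first exact: Green_mass_le_total.
apply: (le_trans _ (@Green_mass_le_total _ a mA)).
apply: Green_mass_le => // t /=; rewrite in_itv /=.
exact/Green_le_left/ltW.
Qed.

Lemma Green_right_tail_le a x :
  (mass `[a, +oo[ x <= mass [set: R] (Num.max x a))%E.
Proof.
have mA : measurable `[a, +oo[ by exact: measurable_itv.
case: (leP a x) => [ax|xa]; first exact: Green_mass_le_total.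
apply: (le_trans _ (@Green_mass_le_total _ a mA)).
apply: Green_mass_le => // t /=; rewrite in_itv /= andbT.
exact/Green_le_right/ltW.
Qed.

Lemma Green_mass_esup_ge0 A : (0 <= ereal_sup [set mass A x | x in [set: R]])%E.
Proof.
apply: le_trans (ereal_sup_ubound (ex_intro2 _ _ 0 I erefl)).
by apply: integral_ge0 => t _; rewrite lee_fin Green_ge0.
Qed.

Lemma Green_left_tail_sup_cvg0 : mass [set: R] x @[x --> -oo] --> 0%E ->
  ereal_sup [set mass `]-oo, (- N)%R] x | x in [set: R]] @[N --> +oo] --> 0%E.
Proof.
move=> mass_cvg0; apply: ge0_near_le_cvge0 => [N|e e0].
  exact: Green_mass_esup_ge0.
have [M [_ massM]] := cvge0_near_le _ mass_cvg0 _ e0.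
near=> N; apply: ge_ereal_sup => _ [x _ <-].
apply: le_trans (Green_left_tail_le _ _) (massM _ _).
rewrite gt_min ltrNl orbC; apply/orP; left; near: N.
exact: nbhs_pinfty_gt (num_real _).
Unshelve. all: end_near. Qed.

Lemma Green_right_tail_sup_cvg0 : mass [set: R] x @[x --> +oo] --> 0%E ->
  ereal_sup [set mass `[N, +oo[ x | x in [set: R]] @[N --> +oo] --> 0%E.
Proof.
move=> mass_cvg0; apply: ge0_near_le_cvge0 => [N|e e0].
  exact: Green_mass_esup_ge0.
have [M [_ massM]] := cvge0_near_le _ mass_cvg0 _ e0.
near=> N; apply: ge_ereal_sup => _ [x _ <-].
apply: le_trans (Green_right_tail_le _ _) (massM _ _).
rewrite lt_max orbC; apply/orP; left; near: N.
exact: nbhs_pinfty_gt (num_real _).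
Unshelve. all: end_near. Qed.

End green_tails.

Theorem lemma5p3 (R : realType) (q u v : R -> R) :
  locally_integrable [set: R] q ->
  {ae (@lebesgue_measure R), forall x, 1 <= q x} ->
  PFSS q u v ->
  (\int[@lebesgue_measure R]_(t in [set: R]) (Green u v x t)%:E)%E
     @[x --> +oo] --> 0%E ->
  (\int[@lebesgue_measure R]_(t in [set: R]) (Green u v x t)%:E)%E
     @[x --> -oo] --> 0%E ->
  ereal_sup [set (\int[@lebesgue_measure R]_(t in `]-oo, (- (N : R))%R]) (Green u v x t)%:E)%E
               | x in [set: R]] @[N --> +oo] --> 0%E /\
  ereal_sup [set (\int[@lebesgue_measure R]_(t in `[(N : R), +oo[) (Green u v x t)%:E)%E
               | x in [set: R]] @[N --> +oo] --> 0%E.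
Proof.
move=> _ _ [[du _ _ _] [dv _ _ _] sign _ _] mass_cvgy mass_cvgNy.
have u_gt0 x : 0 < u x by case: (sign x).
have v_gt0 x : 0 < v x by case: (sign x).
have u'_le0 x : derive1 u x <= 0 by case: (sign x) => _ _ /ltW.
have v'_ge0 x : 0 <= derive1 v x by case: (sign x) => _ _ _ /ltW.
have u_nonincr := derive1_le0_nonincreasing _ du u'_le0.
have v_nondecr := derive1_ge0_nondecreasing _ dv v'_ge0.
have u_cont := derivable1_continuous _ du.
have v_cont := derivable1_continuous _ dv.
split; [exact: Green_left_tail_sup_cvg0 | exact: Green_right_tail_sup_cvg0].
Qed.
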